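(* Let $\tau$ be a linear trajectory on $S_E$ whose direction $\theta$ lies in $\Sigma_0=[0,\pi/6]$, and let $\tau'=\Psi_\gamma\tau$. Then, up to shift, $c(\tau')=c(\tau)'$. That is, the cutting sequence of $\Psi_\gamma\tau$ is the derived sequence of the cutting sequence of $\tau$.
   Context: Let $E$ be the regular hexagon of side length $1$, centred at the origin, with two horizontal sides. Its sides are labelled as follows: the two horizontal sides are labelled $A$, the upper-right and lower-left sides are labelled $B$, and the lower-right and upper-left sides are labelled $C$. Gluing opposite parallel sides by translations gives the translation surface $S_E$ (a flat torus with two marked points, the classes of the vertices of $E$). A linear trajectory is a bi-infinite straight line on $S_E$ avoiding the marked points. Its direction is taken modulo $\pi$, in $[0,\pi]$. Its cutting sequence $c(\tau)\in\{A,B,C\}^{\mathbb Z}$ is the sequence, up to shift, of labels of the sides successively crossed. Derivation: in a word $w=(w_n)\in\{A,B,C\}^{\mathbb Z}$, the letter $w_n$ is sandwiched if $w_{n-1}=w_{n+1}$. The derived sequence $w'$ of $w$ is the word obtained by keeping, in order, exactly the sandwiched letters of $w$ and deleting all the others. An affine automorphism of $S_E$ is a homeomorphism of $S_E$ preserving the set of marked points which, off the marked points, is affine in translation charts with constant derivative. Let $\gamma=\begin{pmatrix}-1&2\sqrt3\\0&1\end{pmatrix}$. There is a unique affine automorphism $\Psi_\gamma$ of $S_E$ with derivative $\gamma$; it is the composition of the reflection in the vertical axis with the affine multi-twist on the horizontal cylinder of $S_E$ (height $\sqrt3/2$, circumference $3$). $\Psi_\gamma$ maps linear trajectories to linear trajectories.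 *)

From Stdlib Require Import Reals ZArith.
Open Scope R_scope.

(* The flat surface S_E is modelled through its universal-cover-like unfolding:
   translates of the hexagon E by the lattice Lambda tile the plane, and
   S_E = R^2 / Lambda.  Linear trajectories on S_E are projections of straight
   lines in R^2; sides of E crossed correspond to edges of the tiling crossed. *)

Inductive label : Set := A | B | C.

Definition pt : Type := (R * R)%type.

Definition s3 : R := sqrt 3.

Definition V0 : pt := (1, 0).
Definition V1 : pt := (1/2, s3/2).
Definition V2 : pt := (-(1/2), s3/2).
Definition V3 : pt := (-1, 0).
Definition V4 : pt := (-(1/2), -(s3/2)).
Definition V5 : pt := (1/2, -(s3/2)).

Definition is_vertex (X : pt) : Prop :=
  X = V0 \/ X = V1 \/ X = V2 \/ X = V3 \/ X = V4 \/ X = V5.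

Definition on_segment (P Q X : pt) : Prop :=
  exists s : R, 0 <= s <= 1 /\
    X = (fst P + s * (fst Q - fst P), snd P + s * (snd Q - snd P)).

Definition side_of_E (l : label) (X : pt) : Prop :=
  match l with
  | A => on_segment V1 V2 X \/ on_segment V4 V5 X
  | B => on_segment V0 V1 X \/ on_segment V3 V4 X
  | C => on_segment V5 V0 X \/ on_segment V2 V3 X
  end.

(* The gluing lattice: generated by the translations identifying opposite
   sides, (0, sqrt 3), (3/2, sqrt 3 / 2) (and (3/2, -sqrt 3/2), their difference). *)
Definition in_lattice (q : pt) : Prop :=
  exists a b : Z, fst q = IZR b * (3/2) /\ snd q = IZR a * s3 + IZR b * (s3/2).

Definition sub (X Y : pt) : pt := (fst X - fst Y, snd X - snd Y).

Definition on_side (l : label) (X : pt) : Prop :=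
  exists lam : pt, in_lattice lam /\ side_of_E l (sub X lam).

Definition marked (X : pt) : Prop :=
  exists lam : pt, in_lattice lam /\ is_vertex (sub X lam).

Definition line_pt (p v : pt) (t : R) : pt :=
  (fst p + t * fst v, snd p + t * snd v).

Definition avoids_marked (p v : pt) : Prop :=
  forall t : R, ~ marked (line_pt p v t).

(* w is (a representative, up to shift, of) the cutting sequence of the
   oriented trajectory t |-> p + t v: the crossing times with sides, listed in
   increasing order, are tt n (n in Z), and w n is the label of the side
   crossed at time tt n. *)
Definition cutting_sequence (p v : pt) (w : Z -> label) : Prop :=
  exists tt : Z -> R,
    (forall n : Z, tt n < tt (n + 1)%Z) /\
    (forall t : R, (exists l : label, on_side l (line_pt p v t)) ->
                   exists n : Z, t = tt n) /\
    (forall n : Z, on_side (w n) (line_pt p v (tt n))).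

Definition sandwiched (w : Z -> label) (n : Z) : Prop :=
  w (n - 1)%Z = w (n + 1)%Z.

Definition derived_upto_shift (w w' : Z -> label) : Prop :=
  exists sigma : Z -> Z,
    (forall k : Z, (sigma k < sigma (k + 1))%Z) /\
    (forall k : Z, sandwiched w (sigma k)) /\
    (forall n : Z, sandwiched w n -> exists k : Z, sigma k = n) /\
    (forall k : Z, w' k = w (sigma k)).

(* The affine automorphism Psi_gamma
   (reflection in the vertical axis composed with the multi-twist on the
   horizontal cylinder) lifts to the linear map gamma of R^2, which preserves
   the lattice and the set of lifts of marked points. *)
Definition gamma_map (X : pt) : pt :=
  (- fst X + 2 * s3 * snd X, snd X).

(* Measure heights [Y] in units of the apothem [sqrt 3 / 2].  [Psi_gamma] preserves heights: on
   the unfolded plane it acts by [(x, Y) |-> (3 Y - x, Y)].  The A-sides lie on the lines [Y = k]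
   and each strip [k < Y < k + 1] meets the B- and C-sides in a zig-zag.  A trajectory with
   direction in [(0, pi/6]] is a line [x = x0 + m Y] with [m >= 3/2]; an explicit computation in
   each strip gives the neighbours of each crossing, hence decides which letters are sandwiched,
   and matches every sandwiched crossing with a crossing of the image trajectory in the same strip,
   with the same label and in the same order.  A horizontal trajectory, like its image, just
   alternates B and C, so every letter is sandwiched. *)

From Stdlib Require Import Reals ZArith Lra Lia Psatz ClassicalEpsilon.
Open Scope R_scope.

Ltac push_IZR := repeat rewrite ?plus_IZR, ?mult_IZR, ?opp_IZR, ?minus_IZR.
Tactic Notation "push_IZR" "in" hyp(H) :=
  repeat rewrite ?plus_IZR, ?mult_IZR, ?opp_IZR, ?minus_IZR in H.

Lemma IZR_not_in_0_1 (m : Z) : 0 < IZR m -> IZR m < 1 -> False.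
Proof. intros H0 H1. apply lt_IZR in H0. apply lt_IZR in H1. lia. Qed.

Lemma Z_eq_0_of_IZR_bounds (m : Z) : -1 < IZR m -> IZR m < 1 -> m = 0%Z.
Proof. intros H0 H1. apply lt_IZR in H0. apply lt_IZR in H1. lia. Qed.

Lemma IZR_gt_m1_nonneg (n : Z) : -1 < IZR n -> 0 <= IZR n.
Proof. intro H. apply IZR_le. apply lt_IZR in H. lia. Qed.

Lemma IZR_pos_ge_1 (n : Z) : 0 < IZR n -> 1 <= IZR n.
Proof. intro H. apply IZR_le. apply lt_IZR in H. lia. Qed.

Lemma IZR_ne_int_plus_frac (k k' : Z) (u : R) : 0 < u < 1 -> IZR k <> IZR k' + u.
Proof. intros Hu E. apply (IZR_not_in_0_1 (k - k')); push_IZR; lra. Qed.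

Lemma int_frac_unique (k k' : Z) (u u' : R) :
  IZR k + u = IZR k' + u' -> 0 <= u < 1 -> 0 <= u' < 1 -> k = k' /\ u = u'.
Proof.
  intros E Hu Hu'.
  assert (k - k' = 0)%Z by (apply Z_eq_0_of_IZR_bounds; push_IZR; lra).
  assert (k = k') by lia. subst. split; [reflexivity|lra].
Qed.

Lemma exists_root_in_unit (a b : R) : 0 < a -> 0 < b < a -> exists u, 0 < u < 1 /\ a * u = b.
Proof.
  intros Ha Hb. exists (b / a). split.
  - split; [apply Rdiv_lt_0_compat; lra|].
    apply (Rmult_lt_reg_l a); [lra|]. field_simplify; lra.
  - field. lra.
Qed.

Lemma lt_of_mul_diff (a c x y : R) :
  0 < x < 1 -> 0 < y < 1 -> 0 < c -> -c <= a -> a * (y - x) = c -> x < y.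
Proof.
  intros Hx Hy Hc Ha E. destruct (Rlt_or_le x y) as [|Hyx]; [assumption|exfalso].
  destruct (Rle_or_lt 0 a).
  - assert (0 <= a * (x - y)) by (apply Rmult_le_pos; lra). lra.
  - assert ((- a) * (x - y) < (- a) * 1) by (apply Rmult_lt_compat_l; lra). lra.
Qed.

(** * Strictly increasing sequences and enumerations *)

Definition strict_incr (f : Z -> R) : Prop := forall n, f n < f (n + 1)%Z.

Lemma strict_incr_le (f : Z -> R) (a b : Z) : strict_incr f -> (a <= b)%Z -> f a <= f b.
Proof.
  intros Hf Hab. replace b with (a + Z.of_nat (Z.to_nat (b - a)))%Z by lia.
  induction (Z.to_nat (b - a)) as [|n IH].
  - rewrite Z.add_0_r. lra.
  - rewrite Nat2Z.inj_succ, <- Z.add_1_r, Z.add_assoc.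
    specialize (Hf (a + Z.of_nat n)%Z). lra.
Qed.

Lemma strict_incr_lt (f : Z -> R) (a b : Z) : strict_incr f -> (a < b)%Z -> f a < f b.
Proof.
  intros Hf Hab. pose proof (Hf a).
  assert (f (a + 1)%Z <= f b) by (apply strict_incr_le; auto; lia). lra.
Qed.

Lemma strict_incr_inj (f : Z -> R) (a b : Z) : strict_incr f -> f a = f b -> a = b.
Proof.
  intros Hf E. destruct (Z.lt_trichotomy a b) as [H|[H|H]]; auto.
  - pose proof (strict_incr_lt f a b Hf H). lra.
  - pose proof (strict_incr_lt f b a Hf H). lra.
Qed.

Lemma strict_incr_no_between (f : Z -> R) (n m : Z) :
  strict_incr f -> ~ (f n < f m < f (n + 1)%Z).
Proof.
  intros Hf [H1 H2]. destruct (Z_le_gt_dec m n) as [h|h].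
  - pose proof (strict_incr_le f m n Hf h). lra.
  - pose proof (strict_incr_le f (n + 1) m Hf ltac:(lia)). lra.
Qed.

Section Enumeration.
Variable P : label -> R -> Prop.

Definition enumerates (Ys : Z -> R) (w : Z -> label) : Prop :=
  strict_incr Ys /\ (forall l Y, P l Y -> exists n, Y = Ys n) /\ (forall n, P (w n) (Ys n)).

Definition gap (a b : R) : Prop := forall l Y, a < Y < b -> ~ P l Y.

Lemma gap_join (a b c : R) : gap a b -> gap b c -> (forall l, ~ P l b) -> gap a c.
Proof.
  intros H1 H2 Hb l Y HY. destruct (Rtotal_order Y b) as [H|[H|H]].
  - apply H1; lra.
  - subst; auto.
  - apply H2; lra.
Qed.

Hypothesis label_unique : forall l l' Y, P l Y -> P l' Y -> l = l'.

Lemma enumerates_next (Ys : Z -> R) (w : Z -> label) (n : Z) (l : label) (Y : R) :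
  enumerates Ys w -> Ys n < Y -> P l Y -> gap (Ys n) Y -> w (n + 1)%Z = l.
Proof.
  intros [Hinc [Hcov Hlab]] HY Hl Hgap.
  destruct (Hcov l Y Hl) as [k ->].
  assert (Hk : (n + 1 <= k)%Z).
  { destruct (Z_le_gt_dec (n + 1) k) as [h|h]; auto.
    pose proof (strict_incr_le Ys k n Hinc ltac:(lia)). lra. }
  pose proof (strict_incr_le Ys _ _ Hinc Hk).
  assert (E : Ys (n + 1)%Z = Ys k).
  { destruct (Req_dec (Ys (n + 1)%Z) (Ys k)) as [e|ne]; auto.
    exfalso. apply (Hgap (w (n + 1)%Z) (Ys (n + 1)%Z)); [split; [apply Hinc|lra]|apply Hlab]. }
  apply (label_unique _ _ (Ys k)); [rewrite <- E; apply Hlab|exact Hl].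
Qed.

Lemma enumerates_prev (Ys : Z -> R) (w : Z -> label) (n : Z) (l : label) (Y : R) :
  enumerates Ys w -> Y < Ys n -> P l Y -> gap Y (Ys n) -> w (n - 1)%Z = l.
Proof.
  intros [Hinc [Hcov Hlab]] HY Hl Hgap.
  destruct (Hcov l Y Hl) as [k ->].
  assert (Hk : (k <= n - 1)%Z).
  { destruct (Z_le_gt_dec k (n - 1)) as [h|h]; auto.
    pose proof (strict_incr_le Ys n k Hinc ltac:(lia)). lra. }
  pose proof (strict_incr_le Ys _ _ Hinc Hk).
  assert (E : Ys (n - 1)%Z = Ys k).
  { destruct (Req_dec (Ys (n - 1)%Z) (Ys k)) as [e|ne]; auto.
    exfalso. apply (Hgap (w (n - 1)%Z) (Ys (n - 1)%Z)); [|apply Hlab].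
    split; [lra|apply strict_incr_lt; auto; lia]. }
  apply (label_unique _ _ (Ys k)); [rewrite <- E; apply Hlab|exact Hl].
Qed.

End Enumeration.

(** * The tiling in height coordinates *)

Definition apothem : R := s3 / 2.

Lemma s3_sq : s3 * s3 = 3.
Proof. unfold s3. apply sqrt_sqrt. lra. Qed.

Lemma apothem_pos : 0 < apothem.
Proof. unfold apothem, s3. pose proof (sqrt_lt_R0 3 ltac:(lra)). lra. Qed.

Definition height (X : pt) : R := snd X / apothem.

Lemma enumerates_of_cutting_sequence (P : label -> R -> Prop) (p v : pt) (w : Z -> label) :
  0 < snd v ->
  (forall l t, on_side l (line_pt p v t) <-> P l (height (line_pt p v t))) ->
  cutting_sequence p v w -> exists Ys, enumerates P Ys w.
Proof.
  intros Hv Hside [tt [Hinc [Hcov Hlab]]]. pose proof apothem_pos.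
  assert (Hheight : forall t, height (line_pt p v t) = (snd p + t * snd v) / apothem) by reflexivity.
  exists (fun n => height (line_pt p v (tt n))). split; [|split].
  - intro n. rewrite !Hheight. apply Rmult_lt_compat_r; [apply Rinv_0_lt_compat; lra|].
    specialize (Hinc n). nra.
  - intros l Y HY. set (t := (Y * apothem - snd p) / snd v).
    assert (Et : height (line_pt p v t) = Y) by (rewrite Hheight; unfold t; field; lra).
    destruct (Hcov t) as [n ->]; [exists l; apply Hside; rewrite Et; exact HY|].
    exists n. symmetry. exact Et.
  - intro n. apply Hside, Hlab.
Qed.

(* Abscissa at height [k + u] of the B- or C-side of the translate of [E] indexed by [(k, j)]
   (the value for A is a dummy). *)
Definition side_x (l : label) (k j : Z) (u : R) : R :=
  match l with
  | A => 0
  | B => 3 * IZR k / 2 + 3 * IZR j + 1 - u / 2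
  | C => 3 * IZR k / 2 + 3 * IZR j + 2 + u / 2
  end.

Lemma lattice_pt (a b : Z) : in_lattice (IZR b * (3/2), IZR a * s3 + IZR b * (s3/2)).
Proof. exists a, b. split; reflexivity. Qed.

Lemma height_eq (Y Z : R) : Y * apothem = Z * apothem -> Y = Z.
Proof. pose proof apothem_pos. intro E. apply (Rmult_eq_reg_r apothem); lra. Qed.

Lemma on_side_A_iff (x Y : R) : on_side A (x, Y * apothem) <->
  exists k j, Y = IZR k /\ side_x B k j 0 <= x <= side_x C k j 0.
Proof.
  unfold on_side, side_x, side_of_E, on_segment, sub, V1, V2, V4, V5; simpl. split.
  - intros [[l1 l2] [[a [b [Ha Hb]]] H]]; simpl in *.
    destruct H as [[s [Hs E]]|[s [Hs E]]]; injection E as E1 E2.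
    + exists (2*a+b+1)%Z, (-a-1)%Z. push_IZR. split; [apply height_eq; unfold apothem in *; push_IZR; lra|lra].
    + exists (2*a+b-1)%Z, (-a)%Z. push_IZR. split; [apply height_eq; unfold apothem in *; push_IZR; lra|lra].
  - intros [k [j [-> Hx]]].
    exists (IZR (k+2*j+1) * (3/2), IZR (-j-1) * s3 + IZR (k+2*j+1) * (s3/2)).
    split; [apply lattice_pt|].
    left. exists (3*IZR k/2 + 3*IZR j + 2 - x). split; [lra|].
    unfold apothem. push_IZR. cbn [fst snd]. f_equal; lra.
Qed.

Lemma on_side_B_iff (x Y : R) : on_side B (x, Y * apothem) <->
  exists k j u, 0 <= u <= 1 /\ Y = IZR k + u /\ x = side_x B k j u.
Proof.
  unfold on_side, side_x, side_of_E, on_segment, sub, V0, V1, V3, V4; simpl. split.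
  - intros [[l1 l2] [[a [b [Ha Hb]]] H]]; simpl in *.
    destruct H as [[s [Hs E]]|[s [Hs E]]]; injection E as E1 E2.
    + exists (2*a+b)%Z, (-a)%Z, s. push_IZR.
      split; [lra|split; [apply height_eq; unfold apothem in *; push_IZR; lra|lra]].
    + exists (2*a+b-1)%Z, (-a)%Z, (1-s). push_IZR.
      split; [lra|split; [apply height_eq; unfold apothem in *; push_IZR; lra|lra]].
  - intros [k [j [u [Hu [-> Hx]]]]].
    exists (IZR (k+2*j) * (3/2), IZR (-j) * s3 + IZR (k+2*j) * (s3/2)).
    split; [apply lattice_pt|].
    left. exists u. split; [lra|].
    unfold apothem. push_IZR. cbn [fst snd]. f_equal; lra.
Qed.

Lemma on_side_C_iff (x Y : R) : on_side C (x, Y * apothem) <->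
  exists k j u, 0 <= u <= 1 /\ Y = IZR k + u /\ x = side_x C k j u.
Proof.
  unfold on_side, side_x, side_of_E, on_segment, sub, V0, V5, V2, V3; simpl. split.
  - intros [[l1 l2] [[a [b [Ha Hb]]] H]]; simpl in *.
    destruct H as [[s [Hs E]]|[s [Hs E]]]; injection E as E1 E2.
    + exists (2*a+b-1)%Z, (-a)%Z, s. push_IZR.
      split; [lra|split; [apply height_eq; unfold apothem in *; push_IZR; lra|lra]].
    + exists (2*a+b)%Z, (-a-1)%Z, (1-s). push_IZR.
      split; [lra|split; [apply height_eq; unfold apothem in *; push_IZR; lra|lra]].
  - intros [k [j [u [Hu [-> Hx]]]]].
    exists (IZR (k+2*j+1) * (3/2), IZR (-j) * s3 + IZR (k+2*j+1) * (s3/2)).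
    split; [apply lattice_pt|].
    left. exists u. split; [lra|].
    unfold apothem. push_IZR. cbn [fst snd]. f_equal; lra.
Qed.

Lemma side_x_marked (l : label) (k j : Z) : l <> A -> marked (side_x l k j 0, IZR k * apothem).
Proof.
  unfold marked, is_vertex, sub, V0, V5.
  intros Hl. destruct l; [contradiction| |]; simpl.
  - exists (IZR (k+2*j) * (3/2), IZR (-j) * s3 + IZR (k+2*j) * (s3/2)).
    split; [apply lattice_pt|]. left.
    unfold apothem. push_IZR. cbn [fst snd]. f_equal; lra.
  - exists (IZR (k+2*j+1) * (3/2), IZR (-j) * s3 + IZR (k+2*j+1) * (s3/2)).
    split; [apply lattice_pt|]. do 5 right.
    unfold apothem. push_IZR. cbn [fst snd]. f_equal; lra.
Qed.

(** * Horizontal trajectories *)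

Definition label_eq_dec (a b : label) : {a = b} + {a <> b}.
Proof. decide equality. Defined.

Definition swap_BC (l : label) : label :=
  match l with A => A | B => C | C => B end.

Definition alternating (w : Z -> label) : Prop :=
  forall n, w n <> A /\ w (n + 1)%Z = swap_BC (w n).

Lemma on_side_off_A_heights (l : label) (x Y : R) :
  (forall k, Y <> IZR k) -> on_side l (x, Y * apothem) ->
  l <> A /\ exists k j u, 0 < u < 1 /\ Y = IZR k + u /\ x = side_x l k j u.
Proof.
  intros HY H.
  assert (Hu : forall k u, 0 <= u <= 1 -> Y = IZR k + u -> 0 < u < 1).
  { intros k u Hu ->. split.
    - destruct (Req_dec u 0) as [->|]; [|lra]. exfalso. apply (HY k). ring.
    - destruct (Req_dec u 1) as [->|]; [|lra]. exfalso. apply (HY (k + 1)%Z). push_IZR. ring. }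
  destruct l.
  - apply on_side_A_iff in H. destruct H as [k [j [E _]]]. exfalso. exact (HY k E).
  - apply on_side_B_iff in H. destruct H as [k [j [u [H0 [E Hx]]]]].
    split; [discriminate|]. exists k, j, u. split; [exact (Hu k u H0 E)|auto].
  - apply on_side_C_iff in H. destruct H as [k [j [u [H0 [E Hx]]]]].
    split; [discriminate|]. exists k, j, u. split; [exact (Hu k u H0 E)|auto].
Qed.

Lemma on_side_side_x (l : label) (k j : Z) (u : R) :
  l <> A -> 0 <= u <= 1 -> on_side l (side_x l k j u, (IZR k + u) * apothem).
Proof.
  intros Hl Hu. destruct l; [contradiction| |].
  - apply on_side_B_iff. exists k, j, u. auto.
  - apply on_side_C_iff. exists k, j, u. auto.
Qed.

Lemma side_x_interlace (l : label) (k j1 j2 : Z) (u : R) :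
  l <> A -> 0 < u < 1 -> j1 <> j2 ->
  exists j, (side_x (swap_BC l) k j u - side_x l k j1 u) *
            (side_x (swap_BC l) k j u - side_x l k j2 u) < 0.
Proof.
  intros Hl Hu Hj.
  assert (Hd : 1 <= IZR j2 - IZR j1 \/ 1 <= IZR j1 - IZR j2).
  { destruct (Z.lt_total j1 j2) as [h|[h|h]]; [left|contradiction|right];
      rewrite <- minus_IZR; apply IZR_le; lia. }
  destruct l; [contradiction| |]; simpl; destruct Hd.
  - exists j1. nra.
  - exists j2. nra.
  - exists (j1 + 1)%Z. push_IZR. nra.
  - exists (j2 + 1)%Z. push_IZR. nra.
Qed.

Lemma between_of_affine (x0 e t1 t2 t : R) :
  e <> 0 -> t1 < t2 ->
  (x0 + t * e - (x0 + t1 * e)) * (x0 + t * e - (x0 + t2 * e)) < 0 -> t1 < t < t2.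
Proof.
  intros He H12 H.
  assert (Ee : (x0 + t * e - (x0 + t1 * e)) * (x0 + t * e - (x0 + t2 * e)) =
               (e * e) * ((t - t1) * (t - t2))) by ring.
  assert (0 < e * e) by (destruct (Rlt_or_le 0 e); nra).
  assert ((t - t1) * (t - t2) < 0) by nra.
  split; nra.
Qed.

Lemma horizontal_alternating (x0 e Y : R) (w : Z -> label) :
  e <> 0 -> (forall k, Y <> IZR k) -> cutting_sequence (x0, Y * apothem) (e, 0) w -> alternating w.
Proof.
  intros He HY [tt [Hinc [Hcov Hlab]]].
  assert (Hline : forall t, line_pt (x0, Y * apothem) (e, 0) t = (x0 + t * e, Y * apothem))
    by (intro t; unfold line_pt; simpl; f_equal; ring).
  intro n.
  pose proof (Hlab n) as H1. pose proof (Hlab (n + 1)%Z) as H2. rewrite Hline in H1, H2.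
  destruct (on_side_off_A_heights _ _ _ HY H1) as [HA1 [k [j1 [u [Hu [EY X1]]]]]].
  destruct (on_side_off_A_heights _ _ _ HY H2) as [HA2 [k' [j2 [u' [Hu' [EY' X2]]]]]].
  rewrite EY in EY'. destruct (int_frac_unique k k' u u') as [<- <-]; [lra|lra|lra|].
  assert (Hne : w (n + 1)%Z <> w n).
  { intro Esame. rewrite Esame in X2.
    destruct (Z.eq_dec j1 j2) as [<-|Hj].
    - assert (Hz : e * (tt (n + 1)%Z - tt n) = 0) by lra.
      pose proof (Hinc n). destruct (Rmult_integral _ _ Hz); lra.
    - destruct (side_x_interlace (w n) k j1 j2 u HA1 Hu Hj) as [j Hbetween].
      set (t := (side_x (swap_BC (w n)) k j u - x0) / e).
      assert (Ht : x0 + t * e = side_x (swap_BC (w n)) k j u) by (unfold t; field; auto).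
      destruct (Hcov t) as [m Em].
      { exists (swap_BC (w n)). rewrite Hline, Ht, EY.
        apply on_side_side_x; [destruct (w n); simpl; congruence|lra]. }
      apply (strict_incr_no_between tt n m Hinc). rewrite <- Em.
      apply (between_of_affine x0 e); auto. rewrite Ht, X1, X2. exact Hbetween. }
  split; auto. destruct (w n), (w (n + 1)%Z); simpl; congruence.
Qed.

Lemma alternating_pred (w : Z -> label) (n : Z) : alternating w -> w (n - 1)%Z = swap_BC (w n).
Proof.
  intro Hw. destruct (Hw (n - 1)%Z) as [HA E]. replace (n - 1 + 1)%Z with n in E by lia.
  rewrite E. destruct (w (n - 1)%Z); [contradiction|reflexivity|reflexivity].
Qed.

Lemma alternating_derived (w w' : Z -> label) :
  alternating w -> alternating w' -> derived_upto_shift w w'.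
Proof.
  intros Hw Hw'.
  set (c := if label_eq_dec (w' 0%Z) (w 0%Z) then 0%Z else 1%Z).
  assert (H0 : w' 0%Z = w c).
  { unfold c. destruct (label_eq_dec (w' 0%Z) (w 0%Z)) as [e|ne]; [exact e|].
    destruct (Hw 0%Z) as [HA E], (Hw' 0%Z) as [HA' _]. change (0 + 1)%Z with 1%Z in E. rewrite E.
    destruct (w' 0%Z), (w 0%Z); simpl; congruence. }
  exists (fun k => (k + c)%Z). split; [|split; [|split]].
  - intro k. lia.
  - intro k. unfold sandwiched. rewrite alternating_pred by exact Hw.
    symmetry. apply Hw.
  - intros n _. exists (n - c)%Z. lia.
  - intro k. induction k as [|k IH|k IH] using Z.peano_ind.
    + exact H0.
    + rewrite <- Z.add_1_r, (proj2 (Hw' k)), IH.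
      replace (k + 1 + c)%Z with (k + c + 1)%Z by lia. symmetry. apply Hw.
    + rewrite <- Z.sub_1_r, (alternating_pred w' k Hw'), IH.
      replace (k - 1 + c)%Z with (k + c - 1)%Z by lia. symmetry. apply alternating_pred, Hw.
Qed.

(** * Sloped trajectories, strip by strip *)

Lemma label_unique_of_heights (P : label -> R -> Prop) :
  (forall Y, P A Y -> exists k, Y = IZR k) ->
  (forall l Y, l <> A -> P l Y -> exists k u, 0 < u < 1 /\ Y = IZR k + u) ->
  (forall Y, P B Y -> P C Y -> False) ->
  forall l l' Y, P l Y -> P l' Y -> l = l'.
Proof.
  intros HA Hfrac HBC.
  assert (HAX : forall l Y, l <> A -> P A Y -> P l Y -> False).
  { intros l Y Hl H1 H2. destruct (HA Y H1) as [k ->].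
    destruct (Hfrac l _ Hl H2) as [k' [u [Hu E]]]. exact (IZR_ne_int_plus_frac k k' u Hu E). }
  intros l l' Y H1 H2.
  destruct l, l'; try reflexivity; exfalso;
    [ apply (HAX B Y) | apply (HAX C Y) | apply (HAX B Y) | apply (HBC Y)
    | apply (HAX C Y) | apply (HBC Y) ]; auto; discriminate.
Qed.

Section Strips.
Variables x0 m : R.

(* In height coordinates the line is [x = x0 + m Y].  [phase k j u] is its abscissa at height
   [k + u] seen from the translate of [E] indexed by [(k, j)]: there the B-side sits at
   [1 - u/2], the C-side at [2 + u/2], and for [u = 0] the A-side covers [[1, 2]]. *)
Definition phase (k j : Z) (u : R) : R := x0 + m * (IZR k + u) - 3 * IZR k / 2 - 3 * IZR j.

Lemma phase_u (k j : Z) (u : R) : phase k j u = phase k j 0 + m * u.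
Proof. unfold phase. ring. Qed.

Lemma phase_j (k j j' : Z) (u : R) : phase k j' u = phase k j u - 3 * (IZR j' - IZR j).
Proof. unfold phase. ring. Qed.

Lemma phase_succ_j (k j : Z) (u : R) : phase k (j + 1) u = phase k j u - 3.
Proof. unfold phase. push_IZR. ring. Qed.

Lemma phase_succ_k (k j : Z) : phase (k + 1) j 0 = phase k j 0 + m - 3 / 2.
Proof. unfold phase. push_IZR. field. Qed.

Lemma phase_pred_k (k j : Z) : phase (k - 1) j 0 = phase k j 0 - m + 3 / 2.
Proof. unfold phase. push_IZR. field. Qed.

Definition hitA (k j : Z) : Prop := 1 < phase k j 0 < 2.
Definition hitB (k j : Z) (u : R) : Prop := 0 < u < 1 /\ phase k j u = 1 - u / 2.
Definition hitC (k j : Z) (u : R) : Prop := 0 < u < 1 /\ phase k j u = 2 + u / 2.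

(* Crossings of the image line, which is [x = 3 Y - x0 - m Y] since [gamma_map] preserves heights
   and maps [(x, Y)] to [(3 Y - x, Y)]. *)
Definition ghitB (k j : Z) (u : R) : Prop := 0 < u < 1 /\ phase k j u = 2 + 7 * u / 2.
Definition ghitC (k j : Z) (u : R) : Prop := 0 < u < 1 /\ phase k j u = 1 + 5 * u / 2.

Definition cross (l : label) (Y : R) : Prop :=
  match l with
  | A => exists k j, hitA k j /\ Y = IZR k
  | B => exists k j u, hitB k j u /\ Y = IZR k + u
  | C => exists k j u, hitC k j u /\ Y = IZR k + u
  end.

Definition gcross (l : label) (Y : R) : Prop :=
  match l with
  | A => exists k j, hitA k j /\ Y = IZR k
  | B => exists k j u, ghitB k j u /\ Y = IZR k + u
  | C => exists k j u, ghitC k j u /\ Y = IZR k + u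
  end.

Lemma cross_label_unique (l l' : label) (Y : R) : cross l Y -> cross l' Y -> l = l'.
Proof.
  apply label_unique_of_heights.
  - intros Y' [k [j [_ ->]]]. exists k. reflexivity.
  - intros [] Y' Hl H; [contradiction| |]; destruct H as [k [j [u [[Hu _] ->]]]]; eauto.
  - intros Y' [k [j [u [[Hu H] ->]]]] [k' [j' [u' [[Hu' H'] E]]]].
    destruct (int_frac_unique k k' u u') as [<- <-]; [exact E|lra|lra|].
    rewrite (phase_j k j j') in H'. apply (IZR_not_in_0_1 (j - j')); push_IZR; lra.
Qed.

Lemma gcross_label_unique (l l' : label) (Y : R) : gcross l Y -> gcross l' Y -> l = l'.
Proof.
  apply label_unique_of_heights.
  - intros Y' [k [j [_ ->]]]. exists k. reflexivity.
  - intros [] Y' Hl H; [contradiction| |]; destruct H as [k [j [u [[Hu _] ->]]]]; eauto.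
  - intros Y' [k [j [u [[Hu H] ->]]]] [k' [j' [u' [[Hu' H'] E]]]].
    destruct (int_frac_unique k k' u u') as [<- <-]; [exact E|lra|lra|].
    rewrite (phase_j k j j') in H'. apply (IZR_not_in_0_1 (j' - j)); push_IZR; lra.
Qed.

Hypothesis slope_ge : 3 / 2 <= m.

(* Both [phase + u/2] (the B-offset) and [phase - u/2] (the C-offset) increase with [u]; if on
   [[u1, u2]] each stays within one period, no side is crossed strictly in between. *)
Lemma gap_in_strip (k jb jc : Z) (u1 u2 : R) :
  0 <= u1 -> u1 <= u2 -> u2 <= 1 ->
  1 <= phase k jb u1 + u1 / 2 -> phase k jb u2 + u2 / 2 <= 4 ->
  2 <= phase k jc u1 - u1 / 2 -> phase k jc u2 - u2 / 2 <= 5 ->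
  gap cross (IZR k + u1) (IZR k + u2).
Proof.
  intros H1 H2 H3 B1 B2 C1 C2 [] Y HY; simpl.
  - intros [k' [j' [_ ->]]]. apply (IZR_not_in_0_1 (k' - k)); push_IZR; lra.
  - intros [k' [j' [u' [[Hu Hd] ->]]]].
    assert (k' = k) by (assert (k' - k = 0)%Z by (apply Z_eq_0_of_IZR_bounds; push_IZR; lra); lia).
    subst k'. assert (0 < m * (u' - u1)) by (apply Rmult_lt_0_compat; lra).
    assert (0 < m * (u2 - u')) by (apply Rmult_lt_0_compat; lra).
    rewrite (phase_u k jb) in B1, B2. rewrite (phase_j k jb j'), (phase_u k jb) in Hd.
    apply (IZR_not_in_0_1 (j' - jb)); push_IZR; nra.
  - intros [k' [j' [u' [[Hu Hd] ->]]]].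
    assert (k' = k) by (assert (k' - k = 0)%Z by (apply Z_eq_0_of_IZR_bounds; push_IZR; lra); lia).
    subst k'. assert (0 < m * (u' - u1)) by (apply Rmult_lt_0_compat; lra).
    assert (0 < m * (u2 - u')) by (apply Rmult_lt_0_compat; lra).
    rewrite (phase_u k jc) in C1, C2. rewrite (phase_j k jc j'), (phase_u k jc) in Hd.
    apply (IZR_not_in_0_1 (j' - jc)); push_IZR; nra.
Qed.

Lemma no_cross_at_int (k j : Z) :
  (phase k j 0 < 1 \/ 2 < phase k j 0) -> -1 < phase k j 0 < 4 -> forall l, ~ cross l (IZR k).
Proof.
  intros Hout Hin [] Hc; simpl in Hc.
  - destruct Hc as [k' [j' [HA E]]]. apply eq_IZR in E. subst k'. unfold hitA in HA.
    rewrite (phase_j k j j') in HA.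
    destruct Hout; [apply (IZR_not_in_0_1 (j - j'))|apply (IZR_not_in_0_1 (j' - j))]; push_IZR; lra.
  - destruct Hc as [k' [j' [u [[Hu _] E]]]]. exact (IZR_ne_int_plus_frac k k' u Hu E).
  - destruct Hc as [k' [j' [u [[Hu _] E]]]]. exact (IZR_ne_int_plus_frac k k' u Hu E).
Qed.

Lemma slope_mul_bounds (u : R) : 0 < u < 1 -> 0 < m * u < m.
Proof. intros. split; nra. Qed.

Ltac phase_lra := unfold phase in *; push_IZR; lra.

Lemma hitA_next (k j : Z) : hitA k j -> exists u, hitC k j u /\ gap cross (IZR k) (IZR k + u).
Proof.
  unfold hitA, hitC. intros H.
  destruct (exists_root_in_unit (m - 1/2) (2 - phase k j 0)) as [u [Hu E]]; [lra|lra|].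
  exists u. split; [split; [exact Hu|rewrite phase_u; lra]|].
  replace (IZR k) with (IZR k + 0) at 1 by ring.
  apply (gap_in_strip k j (j - 1)); try lra; phase_lra.
Qed.

Lemma hitA_prev (k j : Z) :
  hitA k j -> exists u, hitC (k - 1) j u /\ gap cross (IZR (k - 1) + u) (IZR k).
Proof.
  unfold hitA, hitC. intros H.
  destruct (exists_root_in_unit (m - 1/2) (m + 1/2 - phase k j 0)) as [u [Hu E]]; [lra|lra|].
  exists u. split; [split; [exact Hu|rewrite phase_u, phase_pred_k; lra]|].
  replace (IZR k) with (IZR (k - 1) + 1) at 1 by (push_IZR; ring).
  apply (gap_in_strip (k - 1) j j); try lra; phase_lra.
Qed.

Lemma hitC_prev_B (k j : Z) (u : R) : hitC k j u -> phase k j 0 < 1 ->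
  exists ub, ub < u /\ hitB k j ub /\ gap cross (IZR k + ub) (IZR k + u).
Proof.
  unfold hitC, hitB. intros [Hu H] H0. pose proof (slope_mul_bounds u Hu). rewrite phase_u in H.
  destruct (exists_root_in_unit (m + 1/2) (1 - phase k j 0)) as [ub [Hub E]]; [lra|lra|].
  assert (ub < u) by nra.
  exists ub. split; [assumption|]. split; [split; [exact Hub|rewrite phase_u; lra]|].
  apply (gap_in_strip k j (j - 1)); try lra; phase_lra.
Qed.

Lemma hitC_prev_A (k j : Z) (u : R) : hitC k j u -> 1 < phase k j 0 ->
  hitA k j /\ gap cross (IZR k) (IZR k + u).
Proof.
  unfold hitC, hitA. intros [Hu H] H0. pose proof (slope_mul_bounds u Hu). rewrite phase_u in H.
  assert (0 < (m - 1/2) * u) by (apply Rmult_lt_0_compat; lra).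
  split; [lra|].
  replace (IZR k) with (IZR k + 0) at 1 by ring.
  apply (gap_in_strip k j (j - 1)); try lra; phase_lra.
Qed.

Lemma hitC_next_B (k j : Z) (u : R) : hitC k j u -> 7/2 < phase k j 0 + m ->
  exists ub, u < ub /\ hitB k (j + 1) ub /\ gap cross (IZR k + u) (IZR k + ub).
Proof.
  unfold hitC, hitB. intros [Hu H] H0. pose proof (slope_mul_bounds u Hu). rewrite phase_u in H.
  assert (0 < (m - 1/2) * u) by (apply Rmult_lt_0_compat; lra).
  destruct (exists_root_in_unit (m + 1/2) (4 - phase k j 0)) as [ub [Hub E]]; [lra|lra|].
  assert (u < ub) by nra.
  exists ub. split; [assumption|]. split; [split; [exact Hub|rewrite phase_succ_j, phase_u; lra]|].
  apply (gap_in_strip k j j); try lra; phase_lra.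
Qed.

Lemma hitC_next_A (k j : Z) (u : R) : hitC k j u -> phase k j 0 + m < 7/2 ->
  hitA (k + 1) j /\ gap cross (IZR k + u) (IZR (k + 1)).
Proof.
  unfold hitC, hitA. intros [Hu H] H0. pose proof (slope_mul_bounds u Hu). rewrite phase_u in H.
  assert (m * (1 - u) >= 3/2 * (1 - u)) by nra.
  split; [rewrite phase_succ_k; lra|].
  replace (IZR (k + 1)) with (IZR k + 1) by (push_IZR; ring).
  apply (gap_in_strip k j j); try lra; phase_lra.
Qed.

Lemma hitB_prev_C (k j : Z) (u : R) : hitB k (j + 1) u -> phase k j 0 < 2 ->
  exists uc, uc < u /\ hitC k j uc /\ gap cross (IZR k + uc) (IZR k + u).
Proof.
  unfold hitC, hitB. intros [Hu H] H0. pose proof (slope_mul_bounds u Hu).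
  rewrite phase_succ_j, phase_u in H.
  assert (0 < (m + 1/2) * u) by (apply Rmult_lt_0_compat; lra).
  destruct (exists_root_in_unit (m - 1/2) (2 - phase k j 0)) as [uc [Huc E]]; [lra|lra|].
  assert (uc < u) by nra.
  exists uc. split; [assumption|]. split; [split; [exact Huc|rewrite phase_u; lra]|].
  apply (gap_in_strip k j j); try lra; phase_lra.
Qed.

Lemma hitB_prev_B (k j : Z) (u : R) : hitB k (j + 1) u -> 2 < phase k j 0 ->
  exists u', hitB (k - 1) (j + 1) u' /\ gap cross (IZR (k - 1) + u') (IZR k + u).
Proof.
  unfold hitB. intros [Hu H] H0. pose proof (slope_mul_bounds u Hu).
  rewrite phase_succ_j, phase_u in H.
  assert (0 < (m + 1/2) * u) by (apply Rmult_lt_0_compat; lra).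
  destruct (exists_root_in_unit (m + 1/2) (5/2 + m - phase k j 0)) as [u' [Hu' E]]; [lra|lra|].
  exists u'. split; [split; [exact Hu'|rewrite phase_succ_j, phase_u, phase_pred_k; lra]|].
  apply (gap_join cross _ (IZR k)).
  - replace (IZR k) with (IZR (k - 1) + 1) at 1 by (push_IZR; ring).
    apply (gap_in_strip (k - 1) (j + 1) j); try lra; phase_lra.
  - replace (IZR k) with (IZR k + 0) at 1 by ring.
    apply (gap_in_strip k j j); try lra; phase_lra.
  - apply (no_cross_at_int k j); lra.
Qed.

Lemma hitB_next_C (k j : Z) (u : R) : hitB k (j + 1) u -> 11/2 < phase k j 0 + m ->
  exists uc, u < uc /\ hitC k (j + 1) uc /\ gap cross (IZR k + u) (IZR k + uc).
Proof.
  unfold hitC, hitB. intros [Hu H] H0. pose proof (slope_mul_bounds u Hu).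
  rewrite phase_succ_j, phase_u in H.
  assert (0 < (m + 1/2) * u) by (apply Rmult_lt_0_compat; lra).
  destruct (exists_root_in_unit (m - 1/2) (5 - phase k j 0)) as [uc [Huc E]]; [lra|lra|].
  assert (u < uc) by nra.
  exists uc. split; [assumption|]. split; [split; [exact Huc|rewrite phase_succ_j, phase_u; lra]|].
  apply (gap_in_strip k (j + 1) j); try lra; phase_lra.
Qed.

Lemma hitB_next_B (k j : Z) (u : R) : hitB k (j + 1) u -> phase k j 0 + m < 11/2 ->
  exists u', hitB (k + 1) (j + 1) u' /\ gap cross (IZR k + u) (IZR (k + 1) + u').
Proof.
  unfold hitB. intros [Hu H] H0. pose proof (slope_mul_bounds u Hu).
  rewrite phase_succ_j, phase_u in H.
  assert (m * (1 - u) >= 3/2 * (1 - u)) by nra.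
  destruct (exists_root_in_unit (m + 1/2) (4 - (phase k j 0 + m - 3/2))) as [u' [Hu' E]];
    [lra|lra|].
  exists u'. split; [split; [exact Hu'|rewrite phase_succ_j, phase_u, phase_succ_k; lra]|].
  apply (gap_join cross _ (IZR (k + 1))).
  - replace (IZR (k + 1)) with (IZR k + 1) at 1 by (push_IZR; ring).
    apply (gap_in_strip k (j + 1) j); try lra; phase_lra.
  - replace (IZR (k + 1)) with (IZR (k + 1) + 0) at 1 by ring.
    apply (gap_in_strip (k + 1) j j); try lra; phase_lra.
  - apply (no_cross_at_int (k + 1) j); rewrite phase_succ_k; lra.
Qed.

Hypothesis avoids_vertices : forall k j, phase k j 0 <> 1 /\ phase k j 0 <> 2.

Lemma cross_next (Ys : Z -> R) (w : Z -> label) (n : Z) (l : label) (Y : R) :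
  enumerates cross Ys w -> Ys n < Y -> cross l Y -> gap cross (Ys n) Y -> w (n + 1)%Z = l.
Proof. apply enumerates_next, cross_label_unique. Qed.

Lemma cross_prev (Ys : Z -> R) (w : Z -> label) (n : Z) (l : label) (Y : R) :
  enumerates cross Ys w -> Y < Ys n -> cross l Y -> gap cross Y (Ys n) -> w (n - 1)%Z = l.
Proof. apply enumerates_prev, cross_label_unique. Qed.

Lemma hitA_cross (k j : Z) : hitA k j -> cross A (IZR k).
Proof. intro H. exists k, j. auto. Qed.

Lemma hitB_cross (k j : Z) (u : R) : hitB k j u -> cross B (IZR k + u).
Proof. intro H. exists k, j, u. auto. Qed.

Lemma hitC_cross (k j : Z) (u : R) : hitC k j u -> cross C (IZR k + u).
Proof. intro H. exists k, j, u. auto. Qed.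

Lemma hitA_sandwiched (Ys : Z -> R) (w : Z -> label) (n k j : Z) :
  enumerates cross Ys w -> hitA k j -> Ys n = IZR k -> sandwiched w n.
Proof.
  intros Hcs H E. unfold sandwiched.
  destruct (hitA_next k j H) as [u [Hc Hgap]]. destruct (hitA_prev k j H) as [u' [Hc' Hgap']].
  pose proof (proj1 Hc). pose proof (proj1 Hc').
  rewrite (cross_prev Ys w n C (IZR (k - 1) + u')), (cross_next Ys w n C (IZR k + u));
    rewrite ?E; first [reflexivity | assumption | eapply hitC_cross; eassumption | push_IZR; lra].
Qed.

Definition C_sandwich_cond (k j : Z) : Prop :=
  (phase k j 0 < 1 /\ 7/2 < phase k j 0 + m) \/ (1 < phase k j 0 /\ phase k j 0 + m < 7/2).

Definition B_sandwich_cond (k j : Z) : Prop :=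
  (phase k j 0 < 2 /\ 11/2 < phase k j 0 + m) \/ (2 < phase k j 0 /\ phase k j 0 + m < 11/2).

(* The C-crossing is preceded by B or A according to [phase k j 0 < 1], and followed by B or A
   according to [7/2 < phase k j 0 + m]; it is sandwiched iff both neighbours agree. *)
Lemma hitC_sandwiched_iff (Ys : Z -> R) (w : Z -> label) (n k j : Z) (u : R) :
  enumerates cross Ys w -> hitC k j u -> Ys n = IZR k + u -> (sandwiched w n <-> C_sandwich_cond k j).
Proof.
  intros Hcs Hc E. unfold sandwiched, C_sandwich_cond. pose proof (proj1 Hc) as Hu.
  assert (Hprev : (phase k j 0 < 1 /\ w (n - 1)%Z = B) \/ (1 < phase k j 0 /\ w (n - 1)%Z = A)).
  { destruct (Rtotal_order (phase k j 0) 1) as [h|[h|h]].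
    - left. split; [exact h|]. destruct (hitC_prev_B k j u Hc h) as [ub [h1 [h2 h3]]].
      apply (cross_prev Ys w n B (IZR k + ub)); rewrite ?E; auto; [lra|exact (hitB_cross _ _ _ h2)].
    - exfalso. exact (proj1 (avoids_vertices k j) h).
    - right. split; [exact h|]. destruct (hitC_prev_A k j u Hc h) as [h1 h2].
      apply (cross_prev Ys w n A (IZR k)); rewrite ?E; auto; [lra|exact (hitA_cross _ _ h1)]. }
  assert (Hnext : (7/2 < phase k j 0 + m /\ w (n + 1)%Z = B) \/
                  (phase k j 0 + m < 7/2 /\ w (n + 1)%Z = A)).
  { destruct (Rtotal_order (phase k j 0 + m) (7/2)) as [h|[h|h]].
    - right. split; [exact h|]. destruct (hitC_next_A k j u Hc h) as [h1 h2].
      apply (cross_next Ys w n A (IZR (k + 1))); rewrite ?E; auto;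
        [push_IZR; lra|exact (hitA_cross _ _ h1)].
    - exfalso. apply (proj2 (avoids_vertices (k + 1) j)). rewrite phase_succ_k. lra.
    - left. split; [exact h|]. destruct (hitC_next_B k j u Hc h) as [ub [h1 [h2 h3]]].
      apply (cross_next Ys w n B (IZR k + ub)); rewrite ?E; auto; [lra|exact (hitB_cross _ _ _ h2)]. }
  destruct Hprev as [[p1 ->]|[p1 ->]], Hnext as [[q1 ->]|[q1 ->]];
    split; intro H; try discriminate; try reflexivity; try tauto; exfalso; lra.
Qed.

Lemma hitB_sandwiched_iff (Ys : Z -> R) (w : Z -> label) (n k j : Z) (u : R) :
  enumerates cross Ys w -> hitB k (j + 1) u -> Ys n = IZR k + u ->
  (sandwiched w n <-> B_sandwich_cond k j).
Proof.
  intros Hcs Hb E. unfold sandwiched, B_sandwich_cond. pose proof (proj1 Hb) as Hu.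
  assert (Hprev : (phase k j 0 < 2 /\ w (n - 1)%Z = C) \/ (2 < phase k j 0 /\ w (n - 1)%Z = B)).
  { destruct (Rtotal_order (phase k j 0) 2) as [h|[h|h]].
    - left. split; [exact h|]. destruct (hitB_prev_C k j u Hb h) as [uc [h1 [h2 h3]]].
      apply (cross_prev Ys w n C (IZR k + uc)); rewrite ?E; auto; [lra|exact (hitC_cross _ _ _ h2)].
    - exfalso. exact (proj2 (avoids_vertices k j) h).
    - right. split; [exact h|]. destruct (hitB_prev_B k j u Hb h) as [u' [h1 h2]].
      pose proof (proj1 h1).
      apply (cross_prev Ys w n B (IZR (k - 1) + u')); rewrite ?E; auto;
        [push_IZR; lra|exact (hitB_cross _ _ _ h1)]. }
  assert (Hnext : (11/2 < phase k j 0 + m /\ w (n + 1)%Z = C) \/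
                  (phase k j 0 + m < 11/2 /\ w (n + 1)%Z = B)).
  { destruct (Rtotal_order (phase k j 0 + m) (11/2)) as [h|[h|h]].
    - right. split; [exact h|]. destruct (hitB_next_B k j u Hb h) as [u' [h1 h2]].
      pose proof (proj1 h1).
      apply (cross_next Ys w n B (IZR (k + 1) + u')); rewrite ?E; auto;
        [push_IZR; lra|exact (hitB_cross _ _ _ h1)].
    - exfalso. apply (proj1 (avoids_vertices (k + 1) (j + 1))).
      rewrite phase_succ_j, phase_succ_k. lra.
    - left. split; [exact h|]. destruct (hitB_next_C k j u Hb h) as [uc [h1 [h2 h3]]].
      apply (cross_next Ys w n C (IZR k + uc)); rewrite ?E; auto; [lra|exact (hitC_cross _ _ _ h2)]. }
  destruct Hprev as [[p1 ->]|[p1 ->]], Hnext as [[q1 ->]|[q1 ->]];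
    split; intro H; try discriminate; try reflexivity; try tauto; exfalso; lra.
Qed.

Lemma C_sandwich_cond_ghitC (k j : Z) : C_sandwich_cond k j -> exists u', ghitC k j u'.
Proof.
  unfold C_sandwich_cond, ghitC. intros [[h1 h2]|[h1 h2]].
  - destruct (exists_root_in_unit (m - 5/2) (1 - phase k j 0)) as [u [Hu E]]; [lra|lra|].
    exists u. split; [exact Hu|rewrite phase_u; lra].
  - destruct (exists_root_in_unit (5/2 - m) (phase k j 0 - 1)) as [u [Hu E]]; [lra|lra|].
    exists u. split; [exact Hu|rewrite phase_u; lra].
Qed.

Lemma B_sandwich_cond_ghitB (k j : Z) : B_sandwich_cond k j -> exists u', ghitB k j u'.
Proof.
  unfold B_sandwich_cond, ghitB. intros [[h1 h2]|[h1 h2]].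
  - destruct (exists_root_in_unit (m - 7/2) (2 - phase k j 0)) as [u [Hu E]]; [lra|lra|].
    exists u. split; [exact Hu|rewrite phase_u; lra].
  - destruct (exists_root_in_unit (7/2 - m) (phase k j 0 - 2)) as [u [Hu E]]; [lra|lra|].
    exists u. split; [exact Hu|rewrite phase_u; lra].
Qed.

Lemma ghitC_C_sandwich_cond (k j : Z) (u' : R) : ghitC k j u' -> C_sandwich_cond k j.
Proof.
  unfold C_sandwich_cond, ghitC. intros [Hu E]. rewrite phase_u in E.
  destruct (avoids_vertices k j) as [n1 _].
  destruct (Rtotal_order m (5/2)) as [h|[h|h]].
  - right. assert (0 < (5/2 - m) * u') by (apply Rmult_lt_0_compat; lra).
    assert (0 < (5/2 - m) * (1 - u')) by (apply Rmult_lt_0_compat; lra). lra.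
  - exfalso. rewrite h in E. lra.
  - left. assert (0 < (m - 5/2) * u') by (apply Rmult_lt_0_compat; lra).
    assert (0 < (m - 5/2) * (1 - u')) by (apply Rmult_lt_0_compat; lra). lra.
Qed.

Lemma ghitB_B_sandwich_cond (k j : Z) (u' : R) : ghitB k j u' -> B_sandwich_cond k j.
Proof.
  unfold B_sandwich_cond, ghitB. intros [Hu E]. rewrite phase_u in E.
  destruct (avoids_vertices k j) as [_ n2].
  destruct (Rtotal_order m (7/2)) as [h|[h|h]].
  - right. assert (0 < (7/2 - m) * u') by (apply Rmult_lt_0_compat; lra).
    assert (0 < (7/2 - m) * (1 - u')) by (apply Rmult_lt_0_compat; lra). lra.
  - exfalso. rewrite h in E. lra.
  - left. assert (0 < (m - 7/2) * u') by (apply Rmult_lt_0_compat; lra).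
    assert (0 < (m - 7/2) * (1 - u')) by (apply Rmult_lt_0_compat; lra). lra.
Qed.

Lemma C_sandwich_cond_hitC (k j : Z) : C_sandwich_cond k j -> exists u, hitC k j u.
Proof.
  unfold C_sandwich_cond, hitC. intros H.
  destruct (exists_root_in_unit (m - 1/2) (2 - phase k j 0)) as [u [Hu E]]; [lra|lra|].
  exists u. split; [exact Hu|rewrite phase_u; lra].
Qed.

Lemma B_sandwich_cond_hitB (k j : Z) : B_sandwich_cond k j -> exists u, hitB k (j + 1) u.
Proof.
  unfold B_sandwich_cond, hitB. intros H.
  destruct (exists_root_in_unit (m + 1/2) (4 - phase k j 0)) as [u [Hu E]]; [lra|lra|].
  exists u. split; [exact Hu|rewrite phase_succ_j, phase_u; lra].
Qed.

(* A sandwiched crossing of the line at height [Y] corresponds to the crossing of the image line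
   at height [Y'] in the same strip, with the same label; for B the image crossing is indexed by
   the cell [j] to the left of the crossed side. *)
Definition partner (Y Y' : R) : Prop :=
  (exists k j, hitA k j /\ Y = IZR k /\ Y' = IZR k) \/
  (exists k j u u', hitC k j u /\ ghitC k j u' /\ Y = IZR k + u /\ Y' = IZR k + u') \/
  (exists k j u u', hitB k (j + 1) u /\ ghitB k j u' /\ Y = IZR k + u /\ Y' = IZR k + u').

Lemma sandwiched_partner (Ys : Z -> R) (w : Z -> label) (n : Z) :
  enumerates cross Ys w -> sandwiched w n -> exists Y', partner (Ys n) Y'.
Proof.
  intros Hcs Hs. pose proof (proj2 (proj2 Hcs) n) as Hn.
  destruct (w n); simpl in Hn.
  - destruct Hn as [k [j [HA E]]]. exists (IZR k). left. exists k, j. auto.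
  - destruct Hn as [k [j [u [Hb E]]]]. replace j with ((j - 1) + 1)%Z in Hb by lia.
    destruct (B_sandwich_cond_ghitB k (j - 1)) as [u' Hg].
    { apply (hitB_sandwiched_iff Ys w n k (j - 1) u); auto. }
    exists (IZR k + u'). right; right. exists k, (j - 1)%Z, u, u'. auto.
  - destruct Hn as [k [j [u [Hc E]]]].
    destruct (C_sandwich_cond_ghitC k j) as [u' Hg].
    { apply (hitC_sandwiched_iff Ys w n k j u); auto. }
    exists (IZR k + u'). right; left. exists k, j, u, u'. auto.
Qed.

Lemma gcross_partner (Ys : Z -> R) (w : Z -> label) (l : label) (Y' : R) :
  enumerates cross Ys w -> gcross l Y' -> exists n, sandwiched w n /\ partner (Ys n) Y'.
Proof.
  intros Hcs HG. pose proof Hcs as [_ [Hcov _]]. destruct l; simpl in HG.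
  - destruct HG as [k [j [HA ->]]].
    destruct (Hcov A (IZR k)) as [n En]; [exact (hitA_cross k j HA)|].
    exists n. split; [exact (hitA_sandwiched Ys w n k j Hcs HA (eq_sym En))|].
    left. exists k, j. auto.
  - destruct HG as [k [j [u' [Hg ->]]]].
    pose proof (ghitB_B_sandwich_cond k j u' Hg) as Hcond.
    destruct (B_sandwich_cond_hitB k j Hcond) as [u Hb].
    destruct (Hcov B (IZR k + u)) as [n En]; [exact (hitB_cross _ _ _ Hb)|].
    exists n. split; [apply (hitB_sandwiched_iff Ys w n k j u); auto|].
    right; right. exists k, j, u, u'. auto.
  - destruct HG as [k [j [u' [Hg ->]]]].
    pose proof (ghitC_C_sandwich_cond k j u' Hg) as Hcond.
    destruct (C_sandwich_cond_hitC k j Hcond) as [u Hc].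
    destruct (Hcov C (IZR k + u)) as [n En]; [exact (hitC_cross _ _ _ Hc)|].
    exists n. split; [apply (hitC_sandwiched_iff Ys w n k j u); auto|].
    right; left. exists k, j, u, u'. auto.
Qed.

Lemma partner_label (Y Y' : R) (l : label) : partner Y Y' -> cross l Y -> gcross l Y'.
Proof.
  intros [[k [j [HA [-> ->]]]]|[[k [j [u [u' [Hc [Hg [-> ->]]]]]]]|
          [k [j [u [u' [Hb [Hg [-> ->]]]]]]]]] HL.
  - rewrite (cross_label_unique l A _ HL (hitA_cross k j HA)). exists k, j. auto.
  - rewrite (cross_label_unique l C _ HL (hitC_cross _ _ _ Hc)). exists k, j, u'. auto.
  - rewrite (cross_label_unique l B _ HL (hitB_cross _ _ _ Hb)). exists k, j, u'. auto.
Qed.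

Lemma partner_shape (Y Y' : R) : partner Y Y' ->
  (exists k, Y = IZR k /\ Y' = IZR k) \/
  (exists k u u', 0 < u < 1 /\ 0 < u' < 1 /\ Y = IZR k + u /\ Y' = IZR k + u').
Proof.
  intros [[k [j [_ [-> ->]]]]|[[k [j [u [u' [[Hu _] [[Hu' _] [-> ->]]]]]]]|
          [k [j [u [u' [[Hu _] [[Hu' _] [-> ->]]]]]]]]].
  - left. eauto.
  - right. exists k, u, u'. auto.
  - right. exists k, u, u'. auto.
Qed.

Lemma partner_in_strip (k : Z) (u u' : R) : 0 < u < 1 -> 0 < u' < 1 ->
  partner (IZR k + u) (IZR k + u') ->
  (exists j, hitC k j u /\ ghitC k j u') \/ (exists j, hitB k (j + 1) u /\ ghitB k j u').
Proof.
  intros Hu Hu' [[k1 [j [_ [E _]]]]|[[k1 [j [v [v' [Hc [Hg [E1 E2]]]]]]]|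
                                      [k1 [j [v [v' [Hb [Hg [E1 E2]]]]]]]]].
  - exfalso. exact (IZR_ne_int_plus_frac k1 k u Hu (eq_sym E)).
  - pose proof (proj1 Hc). pose proof (proj1 Hg).
    destruct (int_frac_unique k k1 u v) as [<- <-]; [exact E1|lra|lra|].
    destruct (int_frac_unique k k u' v') as [_ <-]; [exact E2|lra|lra|].
    left. exists j. auto.
  - pose proof (proj1 Hb). pose proof (proj1 Hg).
    destruct (int_frac_unique k k1 u v) as [<- <-]; [exact E1|lra|lra|].
    destruct (int_frac_unique k k u' v') as [_ <-]; [exact E2|lra|lra|].
    right. exists j. auto.
Qed.

(* Within a strip, a later crossing lies in a cell further right (by an integer [J]), and the
   image crossings are then forced into the same order: the slope [m - 5/2] or [m - 7/2] of the
   image phases cannot compensate a jump of [3 J]. *)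
Lemma partner_strip_mono (k : Z) (u1 u1' u2 u2' : R) :
  ((exists j, hitC k j u1 /\ ghitC k j u1') \/ (exists j, hitB k (j + 1) u1 /\ ghitB k j u1')) ->
  ((exists j, hitC k j u2 /\ ghitC k j u2') \/ (exists j, hitB k (j + 1) u2 /\ ghitB k j u2')) ->
  u1 < u2 -> u1' < u2'.
Proof.
  intros [[j1 [[Hu1 E1] [Hu1' G1]]]|[j1 [[Hu1 E1] [Hu1' G1]]]]
         [[j2 [[Hu2 E2] [Hu2' G2]]]|[j2 [[Hu2 E2] [Hu2' G2]]]] Hlt;
    unfold phase in E1, E2, G1, G2; rewrite ?plus_IZR in E1; rewrite ?plus_IZR in E2;
    pose proof (IZR_gt_m1_nonneg (j2 - j1)) as HJ0; pose proof (IZR_pos_ge_1 (j2 - j1)) as HJ1;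
    rewrite minus_IZR in HJ0, HJ1.
  - assert (0 < (m - 1/2) * (u2 - u1)) by (apply Rmult_lt_0_compat; lra).
    specialize (HJ1 ltac:(lra)).
    apply (lt_of_mul_diff (m - 5/2) (3 * (IZR j2 - IZR j1))); lra.
  - assert (0 < m * (u2 - u1)) by (apply Rmult_lt_0_compat; lra).
    specialize (HJ0 ltac:(lra)).
    assert (Hm : 7/2 < m).
    { destruct (Rlt_or_le (7/2) m) as [h|h]; [exact h|].
      assert (0 <= (7/2 - m) * u2') by (apply Rmult_le_pos; lra).
      assert (0 < (m - 1/2) * u1) by (apply Rmult_lt_0_compat; lra). lra. }
    apply (lt_of_mul_diff (m - 7/2) (1 + 3 * (IZR j2 - IZR j1) + u1')); lra.
  - assert (0 < m * (u2 - u1)) by (apply Rmult_lt_0_compat; lra).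
    specialize (HJ1 ltac:(lra)).
    apply (lt_of_mul_diff (m - 5/2) (3 * (IZR j2 - IZR j1) - 1 - u1')); lra.
  - assert (0 < (m + 1/2) * (u2 - u1)) by (apply Rmult_lt_0_compat; lra).
    specialize (HJ1 ltac:(lra)).
    apply (lt_of_mul_diff (m - 7/2) (3 * (IZR j2 - IZR j1))); lra.
Qed.

Lemma partner_mono (Y1 Y1' Y2 Y2' : R) :
  partner Y1 Y1' -> partner Y2 Y2' -> Y1 < Y2 -> Y1' < Y2'.
Proof.
  intros P1 P2 Hlt.
  destruct (partner_shape _ _ P1) as [[k1 [E1 E1']]|[k1 [u1 [u1' [Hu1 [Hu1' [E1 E1']]]]]]];
  destruct (partner_shape _ _ P2) as [[k2 [E2 E2']]|[k2 [u2 [u2' [Hu2 [Hu2' [E2 E2']]]]]]];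
    subst Y1 Y1' Y2 Y2'.
  - exact Hlt.
  - pose proof (IZR_gt_m1_nonneg (k2 - k1) ltac:(push_IZR; lra)) as H. push_IZR in H. lra.
  - pose proof (IZR_pos_ge_1 (k2 - k1) ltac:(push_IZR; lra)) as H. push_IZR in H. lra.
  - destruct (Z.eq_dec k1 k2) as [<-|Hk].
    + apply Rplus_lt_compat_l.
      apply (partner_strip_mono k1 u1 u1' u2 u2'); try apply partner_in_strip; auto; lra.
    + pose proof (IZR_gt_m1_nonneg (k2 - k1) ltac:(push_IZR; lra)) as H.
      apply le_IZR in H. assert (H1 : 1 <= IZR (k2 - k1)) by (apply IZR_le; lia).
      push_IZR in H1. lra.
Qed.

Lemma partner_unique (Y Y1' Y2' : R) : partner Y Y1' -> partner Y Y2' -> Y1' = Y2'.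
Proof.
  intros P1 P2.
  destruct (partner_shape _ _ P1) as [[k1 [E1 ->]]|[k1 [u1 [u1' [Hu1 [Hu1' [E1 ->]]]]]]];
  destruct (partner_shape _ _ P2) as [[k2 [E2 ->]]|[k2 [u2 [u2' [Hu2 [Hu2' [E2 ->]]]]]]];
    rewrite E1 in E2.
  - exact E2.
  - exfalso. exact (IZR_ne_int_plus_frac k1 k2 u2 Hu2 E2).
  - exfalso. exact (IZR_ne_int_plus_frac k2 k1 u1 Hu1 (eq_sym E2)).
  - destruct (int_frac_unique k1 k2 u1 u2) as [<- <-]; [exact E2|lra|lra|].
    subst Y. f_equal.
    destruct (partner_in_strip k1 u1 u1' Hu1 Hu1' P1) as [[j [[_ C1] [_ G1]]]|[j [B1 [_ G1]]]];
    destruct (partner_in_strip k1 u1 u2' Hu1 Hu2' P2) as [[j' [[_ C2] [_ G2]]]|[j' [B2 [_ G2]]]].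
    + rewrite (phase_j k1 j j') in C2, G2. rewrite (phase_u k1 j) in G1, G2.
      assert (HZ : (m - 5/2) * (u1' - u2') = 0) by lra.
      destruct (Rmult_integral _ _ HZ) as [Hm|]; [exfalso|lra].
      replace m with (5/2) in G1 by lra. exact (proj1 (avoids_vertices k1 j) ltac:(lra)).
    + pose proof (cross_label_unique C B _ (hitC_cross k1 j u1 (conj Hu1 C1)) (hitB_cross _ _ _ B2)).
      discriminate.
    + pose proof (cross_label_unique B C _ (hitB_cross _ _ _ B1) (hitC_cross k1 j' u1 (conj Hu1 C2))).
      discriminate.
    + destruct B1 as [_ B1], B2 as [_ B2]. rewrite !phase_succ_j in B1, B2.
      rewrite (phase_j k1 j j') in B2, G2. rewrite (phase_u k1 j) in G1, G2.
      assert (HZ : (m - 7/2) * (u1' - u2') = 0) by lra.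
      destruct (Rmult_integral _ _ HZ) as [Hm|]; [exfalso|lra].
      replace m with (7/2) in G1 by lra. exact (proj2 (avoids_vertices k1 j) ltac:(lra)).
Qed.

Lemma enumerations_derived (Ys Ys' : Z -> R) (w w' : Z -> label) :
  enumerates cross Ys w -> enumerates gcross Ys' w' -> derived_upto_shift w w'.
Proof.
  intros Hcs Hcs'. pose proof Hcs as [Hinc [Hcov Hlab]]. pose proof Hcs' as [Hinc' [Hcov' Hlab']].
  assert (Hsig : forall k, exists n, sandwiched w n /\ partner (Ys n) (Ys' k))
    by (intro k; apply (gcross_partner Ys w (w' k)); auto).
  destruct (choice _ Hsig) as [sigma Hs].
  exists sigma. split; [|split; [|split]].
  - intro k. destruct (Hs k) as [_ P1], (Hs (k + 1)%Z) as [_ P2].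
    destruct (Z_lt_le_dec (sigma k) (sigma (k + 1)%Z)) as [h|h]; [exact h|exfalso].
    pose proof (Hinc' k).
    destruct (Z_le_lt_eq_dec _ _ h) as [h'|h'].
    + pose proof (partner_mono _ _ _ _ P2 P1 (strict_incr_lt Ys _ _ Hinc h')). lra.
    + rewrite h' in P2. pose proof (partner_unique _ _ _ P1 P2). lra.
  - intro k. apply Hs.
  - intros n Hn. destruct (sandwiched_partner Ys w n Hcs Hn) as [Y' P].
    destruct (Hcov' (w n) Y') as [k ->]; [exact (partner_label _ _ _ P (Hlab n))|].
    exists k. destruct (Hs k) as [_ Pk]. apply (strict_incr_inj Ys); [exact Hinc|].
    destruct (Rtotal_order (Ys (sigma k)) (Ys n)) as [h|[h|h]]; [exfalso| exact h |exfalso].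
    + pose proof (partner_mono _ _ _ _ Pk P h). lra.
    + pose proof (partner_mono _ _ _ _ P Pk h). lra.
  - intro k. destruct (Hs k) as [_ Pk].
    apply (gcross_label_unique _ _ (Ys' k)); [exact (Hlab' k)|].
    exact (partner_label _ _ _ Pk (Hlab (sigma k))).
Qed.

End Strips.

(** * Back to cutting sequences *)

Lemma gamma_map_height (x Y : R) : gamma_map (x, Y * apothem) = (- x + 3 * Y, Y * apothem).
Proof.
  unfold gamma_map, apothem. cbn [fst snd]. f_equal.
  replace (2 * s3 * (Y * (s3 / 2))) with (Y * (s3 * s3)) by field. rewrite s3_sq. ring.
Qed.

Lemma open_of_closed_avoiding (a d b : R) : a <= d <= b -> d <> a -> d <> b -> a < d < b.
Proof.
  intros [[H1|H1] [H2|H2]] Ha Hb; subst; split; auto; contradiction.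
Qed.

Section Bridge.
Variables x0 m : R.
Hypothesis avoids_vertices : forall k j, phase x0 m k j 0 <> 1 /\ phase x0 m k j 0 <> 2.

Lemma on_side_iff_cross (l : label) (Y : R) :
  on_side l (x0 + m * Y, Y * apothem) <-> cross x0 m l Y.
Proof.
  destruct l; simpl; [rewrite on_side_A_iff|rewrite on_side_B_iff|rewrite on_side_C_iff];
    cbn [side_x]; unfold hitA, hitB, hitC; split.
  - intros [k [j [-> Hx]]]. exists k, j. split; [|reflexivity].
    destruct (avoids_vertices k j). apply open_of_closed_avoiding; auto. unfold phase. lra.
  - intros [k [j [Hk ->]]]. exists k, j. unfold phase in Hk. split; [reflexivity|lra].
  - intros [k [j [u [Hu [-> Hx]]]]]. exists k, j, u.
    assert (E : phase x0 m k j u = 1 - u / 2) by (unfold phase; lra).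
    destruct (avoids_vertices k j) as [N0 _], (avoids_vertices (k + 1) (j - 1)) as [_ N1].
    split; [|reflexivity]. split; [|exact E].
    split; [destruct (Req_dec u 0)|destruct (Req_dec u 1)]; try lra; subst u; exfalso.
    + rewrite phase_u in E. lra.
    + apply N1. unfold phase in *. push_IZR. lra.
  - intros [k [j [u [[Hu E] ->]]]]. exists k, j, u. unfold phase in E. split; [lra|split; [reflexivity|lra]].
  - intros [k [j [u [Hu [-> Hx]]]]]. exists k, j, u.
    assert (E : phase x0 m k j u = 2 + u / 2) by (unfold phase; lra).
    destruct (avoids_vertices k j) as [_ N0], (avoids_vertices (k + 1) j) as [N1 _].
    split; [|reflexivity]. split; [|exact E].
    split; [destruct (Req_dec u 0)|destruct (Req_dec u 1)]; try lra; subst u; exfalso.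
    + rewrite phase_u in E. lra.
    + apply N1. unfold phase in *. push_IZR. lra.
  - intros [k [j [u [[Hu E] ->]]]]. exists k, j, u. unfold phase in E. split; [lra|split; [reflexivity|lra]].
Qed.

Lemma on_side_gamma_iff_gcross (l : label) (Y : R) :
  on_side l (gamma_map (x0 + m * Y, Y * apothem)) <-> gcross x0 m l Y.
Proof.
  rewrite gamma_map_height.
  destruct l; simpl; [rewrite on_side_A_iff|rewrite on_side_B_iff|rewrite on_side_C_iff];
    cbn [side_x]; unfold hitA, ghitB, ghitC; split.
  - intros [k [j [-> Hx]]]. exists k, (- j - 1)%Z. split; [|reflexivity].
    destruct (avoids_vertices k (- j - 1)). apply open_of_closed_avoiding; auto.
    unfold phase. push_IZR. lra.
  - intros [k [j [Hk ->]]]. exists k, (- j - 1)%Z. unfold phase in Hk.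
    split; [reflexivity|push_IZR; lra].
  - intros [k [j [u [Hu [-> Hx]]]]]. exists k, (- j - 1)%Z, u.
    assert (E : phase x0 m k (- j - 1) u = 2 + 7 * u / 2) by (unfold phase; push_IZR; lra).
    destruct (avoids_vertices k (- j - 1)) as [_ N0], (avoids_vertices (k + 1) (- j)) as [N1 _].
    split; [|reflexivity]. split; [|exact E].
    split; [destruct (Req_dec u 0)|destruct (Req_dec u 1)]; try lra; subst u; exfalso.
    + rewrite phase_u in E. lra.
    + apply N1. unfold phase in *. push_IZR. push_IZR in E. lra.
  - intros [k [j [u [[Hu E] ->]]]]. exists k, (- j - 1)%Z, u. unfold phase in E.
    split; [lra|split; [reflexivity|push_IZR; lra]].
  - intros [k [j [u [Hu [-> Hx]]]]]. exists k, (- j - 1)%Z, u.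
    assert (E : phase x0 m k (- j - 1) u = 1 + 5 * u / 2) by (unfold phase; push_IZR; lra).
    destruct (avoids_vertices k (- j - 1)) as [N0 _], (avoids_vertices (k + 1) (- j - 1)) as [_ N1].
    split; [|reflexivity]. split; [|exact E].
    split; [destruct (Req_dec u 0)|destruct (Req_dec u 1)]; try lra; subst u; exfalso.
    + rewrite phase_u in E. lra.
    + apply N1. unfold phase in *. push_IZR. push_IZR in E. lra.
  - intros [k [j [u [[Hu E] ->]]]]. exists k, (- j - 1)%Z, u. unfold phase in E.
    split; [lra|split; [reflexivity|push_IZR; lra]].
Qed.

End Bridge.

Lemma gamma_line (p v : pt) (t : R) :
  line_pt (gamma_map p) (gamma_map v) t = gamma_map (line_pt p v t).
Proof. unfold line_pt, gamma_map. cbn [fst snd]. f_equal; ring. Qed.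

Lemma pt_height (X : pt) : X = (fst X, height X * apothem).
Proof.
  pose proof apothem_pos. destruct X as [x y]. unfold height. cbn [fst snd]. f_equal. field. lra.
Qed.

Lemma line_pt_height_coords (p v : pt) (t : R) : 0 < snd v ->
  line_pt p v t =
  (fst p - fst v * snd p / snd v + fst v * apothem / snd v * height (line_pt p v t),
   height (line_pt p v t) * apothem).
Proof.
  intro Hv. pose proof apothem_pos. unfold height, line_pt. cbn [fst snd]. f_equal; field; lra.
Qed.

Lemma derived_upto_shift_sloped (p v : pt) (w w' : Z -> label) :
  0 < snd v -> s3 * snd v <= fst v -> avoids_marked p v ->
  cutting_sequence p v w -> cutting_sequence (gamma_map p) (gamma_map v) w' ->
  derived_upto_shift w w'.
Proof.
  intros Hv Hslope Hav H1 H2. pose proof apothem_pos.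
  set (x0 := fst p - fst v * snd p / snd v). set (m := fst v * apothem / snd v).
  assert (Hm : 3 / 2 <= m).
  { unfold m, apothem. apply (Rmult_le_reg_r (snd v)); [lra|].
    replace (fst v * (s3 / 2) / snd v * snd v) with (fst v * s3 / 2) by (field; lra).
    pose proof s3_sq as Hs3. pose proof (sqrt_lt_R0 3 ltac:(lra)) as Hs3_pos. fold s3 in Hs3_pos.
    nra. }
  assert (Hvert : forall k j, phase x0 m k j 0 <> 1 /\ phase x0 m k j 0 <> 2).
  { intros k j. set (t := (IZR k * apothem - snd p) / snd v).
    assert (Ht : height (line_pt p v t) = IZR k) by (unfold height, line_pt, t; simpl; field; lra).
    pose proof (line_pt_height_coords p v t Hv) as Hline. rewrite Ht in Hline.
    split; intro E; apply (Hav t); rewrite Hline;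
      [replace (_ + _ * IZR k) with (side_x B k j 0) | replace (_ + _ * IZR k) with (side_x C k j 0)];
      try (apply side_x_marked; discriminate); unfold phase in E; simpl; fold x0 m; lra. }
  destruct (enumerates_of_cutting_sequence (cross x0 m) p v w Hv) as [Ys HYs]; [|exact H1|].
  { intros l t. rewrite (line_pt_height_coords p v t Hv) at 1. apply on_side_iff_cross, Hvert. }
  destruct (enumerates_of_cutting_sequence (gcross x0 m) (gamma_map p) (gamma_map v) w')
    as [Ys' HYs']; [exact Hv| |exact H2|].
  { intros l t. rewrite gamma_line. change (height (gamma_map (line_pt p v t)))
      with (height (line_pt p v t)).
    rewrite (line_pt_height_coords p v t Hv) at 1. apply on_side_gamma_iff_gcross, Hvert. }
  exact (enumerations_derived x0 m Hm Hvert Ys Ys' w w' HYs HYs').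
Qed.

Lemma derived_upto_shift_horizontal (p : pt) (w w' : Z -> label) :
  avoids_marked p (1, 0) -> cutting_sequence p (1, 0) w ->
  cutting_sequence (gamma_map p) (gamma_map (1, 0)) w' -> derived_upto_shift w w'.
Proof.
  intros Hav H1 H2.
  assert (Hheight : forall k, height p <> IZR k).
  { intros k E. apply (Hav (3 * IZR k / 2 + 1 - fst p)).
    replace (line_pt p (1, 0) (3 * IZR k / 2 + 1 - fst p)) with (side_x B k 0 0, IZR k * apothem)
      by (unfold line_pt; simpl; f_equal; rewrite <- E; unfold height;
          pose proof apothem_pos; field; lra).
    apply side_x_marked. discriminate. }
  apply alternating_derived.
  - rewrite (pt_height p) in H1. exact (horizontal_alternating _ 1 _ w ltac:(lra) Hheight H1).
  - rewrite (pt_height p), gamma_map_height in H2.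
    replace (gamma_map (1, 0)) with (-1, 0) in H2 by (unfold gamma_map; simpl; f_equal; ring).
    exact (horizontal_alternating _ (-1) _ w' ltac:(lra) Hheight H2).
Qed.

Theorem mainTheorem4 :
  forall (p : pt) (theta : R),
    0 <= theta <= PI / 6 ->
    avoids_marked p (cos theta, sin theta) ->
    forall w w' : Z -> label,
      cutting_sequence p (cos theta, sin theta) w ->
      cutting_sequence (gamma_map p) (gamma_map (cos theta, sin theta)) w' ->
      derived_upto_shift w w'.
Proof.
  intros p theta Htheta Hav w w' H1 H2. pose proof PI_RGT_0.
  destruct (Rle_lt_or_eq_dec 0 theta (proj1 Htheta)) as [Hpos|<-].
  - apply (derived_upto_shift_sloped p (cos theta, sin theta) w w'); auto; simpl.
    + apply sin_gt_0; lra.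
    + assert (Hcos : 0 <= cos (theta + PI / 3)) by (apply cos_ge_0; lra).
      rewrite cos_plus, cos_PI3, sin_PI3 in Hcos. unfold s3. lra.
  - rewrite cos_0, sin_0 in *. exact (derived_upto_shift_horizontal p w w' Hav H1 H2).
Qed.
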